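(* (1) The groups $\mathrm{Aut}(Q_D)$ and $\mathrm{Aut}(Q_W)$ are each conjugate in $GL(4,\mathbb R)$ to the Lorentz group $O(3,1)=\mathrm{Aut}(Q_{\mathcal L})$; explicitly $\mathrm{Aut}(Q_D)=\mathbf J_0^{-1}O(3,1)\mathbf J_0$ and $\mathrm{Aut}(Q_W)=\mathbf A^{-1}O(3,1)\mathbf A$ where $\mathbf J_0=\tfrac12\begin{pmatrix}1&1&1&1\\1&1&-1&-1\\1&-1&1&-1\\1&-1&-1&1\end{pmatrix}$ and $\mathbf A=\begin{pmatrix}2&1&0&0\\2&-1&0&0\\0&0&1&1\\0&0&-1&1\end{pmatrix}$. (2) For any two ordered, oriented Descartes configurations $\mathcal D,\mathcal D'$ there is a unique $\mathbf U\in\mathrm{Aut}(Q_D)$ with $\mathbf U\mathbf W_{\mathcal D}=\mathbf W_{\mathcal D'}$; in particular $\mathbf W\mapsto\mathbf U\mathbf W$ defines a transitive left action of $\mathrm{Aut}(Q_D)$ on $\mathcal M_{\mathbb D}$. (3) For any two ordered, oriented Descartes configurations $\mathcal D,\mathcal D'$ there is a unique $\mathbf V\in\mathrm{Aut}(Q_W)$ with $\mathbf W_{\mathcal D}\mathbf V^{-1}=\mathbf W_{\mathcal D'}$; in particular $\mathbf W\mapsto \mathbf W\mathbf V^{-1}$ defines a transitive right action of $\mathrm{Aut}(Q_W)$ on $\mathcal M_{\mathbb D}$. (4) These two actions on $\mathcal M_{\mathbb D}$ commute.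
   Context: Oriented circles/lines, interiors, and (ordered, oriented) Descartes configurations: an oriented circle of radius $r$ has oriented curvature $b=\pm1/r$ ($+$ if its normal points inward, in which case its interior is the open disk; $-$ otherwise, interior the open exterior); an oriented line has curvature $0$, a unit normal $\mathbf h$, and interior the open half-plane into which $\mathbf h$ points. A Descartes configuration is four mutually tangent circles/lines with six distinct tangency points (parallel lines tangent at $\infty$); it is oriented if the interiors are pairwise disjoint, or become so after reversing all orientations. Augmented curvature-center coordinates of an oriented circle with center $\mathbf c=(c_1,c_2)$ and oriented radius $r$ ($r>0$ iff the interior is the bounded disk): $\mathbf w(C)=\big((|\mathbf c|^2-r^2)/r,\;1/r,\;c_1/r,\;c_2/r\big)$; of the oriented line $\{\mathbf x:\mathbf x\cdot\mathbf h=m\}$ with interior-pointing unit normal $\mathbf h$: $\mathbf w(C)=(2m,0,h_1,h_2)$. For an ordered, oriented Descartes configuration $\mathcal D=(C_1,\dots,C_4)$, $\mathbf W_{\mathcal D}$ is the $4\times4$ matrix with rows $\mathbf w(C_i)$. $\mathbf Q_D=\mathbf I-\frac12\mathbf 1\mathbf 1^T$; $\mathbf Q_W=\begin{pmatrix}0&-4&0&0\\-4&0&0&0\\0&0&2&0\\0&0&0&2\end{pmatrix}$; $\mathbf Q_{\mathcal L}=\mathrm{diag}(-1,1,1,1)$. For a symmetric matrix $\mathbf Q$, $\mathrm{Aut}(Q)=\{\mathbf U\in GL(4,\mathbb R):\mathbf U^T\mathbf Q\mathbf U=\mathbf Q\}$. Known fact (Augmented Euclidean Descartes Theorem): $\mathcal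 D\mapsto\mathbf W_{\mathcal D}$ is a bijection from the set of ordered, oriented Descartes configurations onto $\mathcal M_{\mathbb D}:=\{\mathbf W\in M_4(\mathbb R):\mathbf W^T\mathbf Q_D\mathbf W=\mathbf Q_W\}$. *)

From HB Require Import structures.
From mathcomp Require Import all_boot all_order all_algebra.
Set Implicit Arguments. Unset Strict Implicit. Unset Printing Implicit Defensive.
Import Order.TTheory GRing.Theory Num.Theory.
Local Open Scope ring_scope.

Section Defs.
Variable R : realFieldType.

Definition mx4 (s : seq (seq R)) : 'M[R]_4 :=
  \matrix_(i < 4, j < 4) nth 0 (nth [::] s i) j.

Definition QD : 'M[R]_4 := 1%:M - 2^-1 *: const_mx 1.

Definition QW : 'M[R]_4 :=
  mx4 [:: [:: 0; -4; 0; 0]; [:: -4; 0; 0; 0]; [:: 0; 0; 2; 0]; [:: 0; 0; 0; 2]].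

Definition QL : 'M[R]_4 :=
  mx4 [:: [:: -1; 0; 0; 0]; [:: 0; 1; 0; 0]; [:: 0; 0; 1; 0]; [:: 0; 0; 0; 1]].

Definition Aut (Q : 'M[R]_4) (U : 'M[R]_4) : Prop :=
  U \in unitmx /\ U^T *m Q *m U = Q.

Definition Lorentz := Aut QL.

Definition MD (W : 'M[R]_4) : Prop := W^T *m QD *m W = QW.

Definition J0 : 'M[R]_4 :=
  2^-1 *: mx4 [:: [:: 1; 1; 1; 1]; [:: 1; 1; -1; -1]; [:: 1; -1; 1; -1]; [:: 1; -1; -1; 1]].

Definition Amx : 'M[R]_4 :=
  mx4 [:: [:: 2; 1; 0; 0]; [:: 2; -1; 0; 0]; [:: 0; 0; 1; 1]; [:: 0; 0; -1; 1]].

End Defs.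

From HB Require Import structures.
From mathcomp Require Import all_boot all_order all_algebra ring lra.
Set Implicit Arguments. Unset Strict Implicit. Unset Printing Implicit Defensive.
Import Order.TTheory GRing.Theory Num.Theory.
Local Open Scope ring_scope.

(* All four statements are congruence bookkeeping. If P^T Q1 P = Q2 then conjugation by P
   maps Aut(Q1) onto Aut(Q2); the explicit matrices satisfy J0^T Q_L J0 = Q_D and
   A^T Q_L A = Q_W. Every W in M_D is invertible since Q_W is, so for W, W' in M_D the
   matrices W' W^-1 and W'^-1 W are the unique elements of Aut(Q_D) and Aut(Q_W) carrying
   W to W'. The two actions commute by associativity. *)

Section Congruence.
Variable R : realFieldType.
Implicit Types P L U V W : 'M[R]_4.

Lemma Aut_conj (Q1 Q2 : 'M[R]_4) P L : P \in unitmx -> P^T *m Q1 *m P = Q2 ->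
  Aut Q1 L -> Aut Q2 (invmx P *m L *m P).
Proof.
move=> uP <- [uL hL]; split; first by rewrite !unitmx_mul unitmx_inv uP uL.
rewrite !trmx_mul trmx_inv -!mulmxA mulKVmx ?unitmx_tr // mulKmx ?unitmx_tr //.
by rewrite (mulmxA L^T) (mulmxA (L^T *m Q1)) hL !mulmxA.
Qed.

Lemma Aut_conjP (Q1 Q2 : 'M[R]_4) P : P \in unitmx -> P^T *m Q1 *m P = Q2 ->
  forall U, Aut Q2 U <-> exists L, Aut Q1 L /\ U = invmx P *m L *m P.
Proof.
move=> uP hQ2 U; split; last by move=> [L [autL ->]]; exact: Aut_conj autL.
have uPinv : invmx P \in unitmx by rewrite unitmx_inv.
have hQ1 : (invmx P)^T *m Q2 *m invmx P = Q1.
  by rewrite -hQ2 trmx_inv !mulmxA mulmxK // mulVmx ?unitmx_tr // mul1mx.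
move=> autU; exists (P *m U *m invmx P); split.
  by have := Aut_conj uPinv hQ1 autU; rewrite invmxK.
by rewrite !mulmxA mulVmx // mul1mx mulmxKV.
Qed.

Variables Q1 Q2 : 'M[R]_4.

Lemma congr_unit W : Q2 \in unitmx -> W^T *m Q1 *m W = Q2 -> W \in unitmx.
Proof.
move=> uQ2 hW; have := uQ2; rewrite -hW !unitmx_mul unitmx_tr.
by case/andP => /andP[].
Qed.

Lemma congr_mull U W : Aut Q1 U -> W^T *m Q1 *m W = Q2 ->
  (U *m W)^T *m Q1 *m (U *m W) = Q2.
Proof.
move=> [_ hU] hW.
by rewrite trmx_mul !mulmxA -(mulmxA _ U^T) -(mulmxA _ (U^T *m _)) hU.
Qed.

Lemma congr_mulr_inv V W : Aut Q2 V -> W^T *m Q1 *m W = Q2 ->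
  (W *m invmx V)^T *m Q1 *m (W *m invmx V) = Q2.
Proof.
move=> [uV hV] hW; rewrite trmx_mul !mulmxA -(mulmxA _ W^T) -(mulmxA _ (W^T *m _)) hW.
by rewrite -{1}hV trmx_inv -!mulmxA mulKmx ?unitmx_tr // mulmxV // mulmx1.
Qed.

Lemma Aut_left_quotient W W' : W \in unitmx -> W' \in unitmx ->
  W^T *m Q1 *m W = Q2 -> W'^T *m Q1 *m W' = Q2 -> Aut Q1 (W' *m invmx W).
Proof.
move=> uW uW' hW hW'; split; first by rewrite unitmx_mul uW' unitmx_inv.
rewrite trmx_mul !mulmxA -(mulmxA _ W'^T) -(mulmxA _ (W'^T *m _)) hW'.
by rewrite -hW trmx_inv !mulmxA mulVmx ?unitmx_tr // mul1mx mulmxK.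
Qed.

Lemma Aut_right_quotient W W' : W \in unitmx -> W' \in unitmx ->
  W^T *m Q1 *m W = Q2 -> W'^T *m Q1 *m W' = Q2 -> Aut Q2 (invmx W' *m W).
Proof.
move=> uW uW' hW hW'; split; first by rewrite unitmx_mul uW unitmx_inv uW'.
rewrite trmx_mul -{2}hW -hW' trmx_inv !mulmxA.
by rewrite -!mulmxA mulKmx ?unitmx_tr // mulKVmx // mulmxA.
Qed.

End Congruence.

Ltac mx4_entrywise := apply/matrixP => - [[|[|[|[|?]]]] ?] [[|[|[|[|?]]]] ?] //;
  repeat (rewrite mxE || rewrite big_ord_recr /= || rewrite big_ord0);
  rewrite /widen_ord /ord_max /=; lra.

Section ExplicitMatrices.
Variable R : realFieldType.

Lemma J0_congr : (J0 R)^T *m QL R *m J0 R = QD R.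
Proof. rewrite /J0 /QL /QD /mx4; mx4_entrywise. Qed.

Lemma Amx_congr : (Amx R)^T *m QL R *m Amx R = QW R.
Proof. rewrite /Amx /QL /QW /mx4; mx4_entrywise. Qed.

Lemma J0_unit : J0 R \in unitmx.
Proof.
have J0K : J0 R *m J0 R = 1%:M by rewrite /J0 /mx4; mx4_entrywise.
by case: (mulmx1_unit J0K).
Qed.

Lemma Amx_unit : Amx R \in unitmx.
Proof.
have AmxK : Amx R *m mx4 [:: [:: 4^-1; 4^-1; 0; 0]; [:: 2^-1; -(2^-1); 0; 0];
                             [:: 0; 0; 2^-1; -(2^-1)]; [:: 0; 0; 2^-1; 2^-1]] = 1%:M.
  by rewrite /Amx /mx4; mx4_entrywise.
by case: (mulmx1_unit AmxK).
Qed.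

Lemma QW_unit : QW R \in unitmx.
Proof.
have QLK : QL R *m QL R = 1%:M by rewrite /QL /mx4; mx4_entrywise.
have [uQL _] := mulmx1_unit QLK.
by rewrite -Amx_congr !unitmx_mul unitmx_tr Amx_unit uQL.
Qed.

Lemma MD_unit (W : 'M[R]_4) : MD W -> W \in unitmx.
Proof. exact: congr_unit QW_unit. Qed.

End ExplicitMatrices.

Theorem theorem3p3 (R : realFieldType) :
  (* (1) conjugacy to the Lorentz group *)
  (J0 R \in unitmx /\
   forall U : 'M[R]_4,
     Aut (QD R) U <-> exists L : 'M[R]_4, Lorentz L /\ U = invmx (J0 R) *m L *m J0 R) /\
  (Amx R \in unitmx /\
   forall V : 'M[R]_4,
     Aut (QW R) V <-> exists L : 'M[R]_4, Lorentz L /\ V = invmx (Amx R) *m L *m Amx R) /\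
  (* (2) simply transitive left action of Aut(Q_D) on M_D *)
  (forall U W : 'M[R]_4, Aut (QD R) U -> MD W -> MD (U *m W)) /\
  (forall W W' : 'M[R]_4, MD W -> MD W' ->
     exists! U : 'M[R]_4, Aut (QD R) U /\ U *m W = W') /\
  (* (3) simply transitive right action of Aut(Q_W) on M_D *)
  (forall V W : 'M[R]_4, Aut (QW R) V -> MD W -> MD (W *m invmx V)) /\
  (forall W W' : 'M[R]_4, MD W -> MD W' ->
     exists! V : 'M[R]_4, Aut (QW R) V /\ W *m invmx V = W') /\
  (* (4) the two actions commute *)
  (forall U V W : 'M[R]_4, Aut (QD R) U -> Aut (QW R) V -> MD W ->
     (U *m W) *m invmx V = U *m (W *m invmx V)).
Proof.
split; first by split; [exact: J0_unit | exact: Aut_conjP (J0_unit R) (J0_congr R)].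
split; first by split; [exact: Amx_unit | exact: Aut_conjP (Amx_unit R) (Amx_congr R)].
split; first exact: congr_mull.
split.
  move=> W W' hW hW'; have uW := MD_unit hW; have uW' := MD_unit hW'.
  exists (W' *m invmx W); split.
    by split; [exact: Aut_left_quotient uW uW' hW hW' | rewrite mulmxKV].
  by move=> U [_ <-]; rewrite mulmxK.
split; first exact: congr_mulr_inv.
split.
  move=> W W' hW hW'; have uW := MD_unit hW; have uW' := MD_unit hW'.
  exists (invmx W' *m W); split.
    split; first exact: Aut_right_quotient uW uW' hW hW'.
    by rewrite -{1}(mulKVmx uW' W) mulmxK // unitmx_mul unitmx_inv uW'.
  move=> V [[uV _] hV].
  have W'V : W' *m V = W by rewrite -hV mulmxKV.
  by rewrite -W'V mulKmx.
by move=> U V W _ _ _; rewrite mulmxA.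
Qed.
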